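(* Fix a positive integer $m$, graphs $H_1,\dots,H_k$ each with exactly $m$ edges, a finite complete graph $K$ on at least two vertices, and real constants $\gamma_1,\dots,\gamma_k$. Set \[ \mathcal{O}=\max_{\nu\in\Delta^K}\sum_{i=1}^k\gamma_i\,\beta(\nu;H_i). \] If $\mu\in\Delta^K$ achieves $\mathcal{O}$, then \begin{align*} m\cdot\mathcal{O}\cdot\mu(e)&=\sum_{i=1}^k\gamma_i\sum_{\substack{H\in\mathrm{cp}(K,H_i),\\ E(H)\ni e}}\mu(H)\quad\text{for each } e\in E(K),\\ m\cdot\mathcal{O}\cdot\bar\mu(x)&=\sum_{i=1}^k\gamma_i\sum_{\substack{H\in\mathrm{cp}(K,H_i),\\ V(H)\ni x}}\deg_H(x)\,\mu(H)\quad\text{for each } x\in V(K). \end{align*}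
   Context: $\Delta^K$ is the set of probability measures on $E(K)$ (edge probability measures on $K$). $\mathrm{cp}(K,H)$ is the set of (unlabeled, not necessarily induced) subgraphs of $K$ isomorphic to $H$. For $\mu\in\Delta^K$ and a subgraph $H\subseteq K$, $\mu(H)=\prod_{e\in E(H)}\mu(e)$; $\beta(\mu;H)=\sum_{H'\in\mathrm{cp}(K,H)}\mu(H')$; and $\bar\mu(x)=\sum_{y\in V(K)\setminus\{x\}}\mu(xy)$. *)

From HB Require Import structures.
From mathcomp Require Import all_boot all_order all_algebra.
From mathcomp Require Import reals.
Set Implicit Arguments. Unset Strict Implicit. Unset Printing Implicit Defensive.
Import Order.TTheory GRing.Theory Num.Theory.
Local Open Scope ring_scope.

Record sgraph := SGraph {
  nv : nat;
  gE : {set {set 'I_nv}};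
  gE_ok : [forall e in gE, #|e| == 2%N] }.

Section Defs.
Variable V : finType.   (* vertices of the complete graph K = K_V *)
Variable R : realType.

Definition is_edge (e : {set V}) : bool := #|e| == 2%N.

(* edge probability measures on K (values off E(K) are irrelevant) *)
Definition in_Delta (mu : {set V} -> R) : Prop :=
  (forall e, is_edge e -> 0 <= mu e) /\ \sum_(e | is_edge e) mu e = 1.

Definition subgr := ({set V} * {set {set V}})%type.

(* cp(K,H): (unlabeled, not necessarily induced) subgraphs of K isomorphic to H *)
Definition is_copy (H : sgraph) (c : subgr) : bool :=
  [exists f : {ffun 'I_(nv H) -> V},
     [&& injectiveb f, c.1 == f @: setT & c.2 == [set f @: e | e : {set 'I_(nv H)} in gE H]]].

Definition muH (mu : {set V} -> R) (c : subgr) : R := \prod_(e in c.2) mu e.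

Definition beta (mu : {set V} -> R) (H : sgraph) : R :=
  \sum_(c | is_copy H c) muH mu c.

Definition degc (c : subgr) (x : V) : nat := #|[set e in c.2 | x \in e]|.

Definition mubar (mu : {set V} -> R) (x : V) : R :=
  \sum_(y | y != x) mu [set x; y].

End Defs.

From HB Require Import structures.
From mathcomp Require Import all_boot all_order all_algebra.
From mathcomp Require Import reals.
From mathcomp Require Import ring lra.
Set Implicit Arguments. Unset Strict Implicit. Unset Printing Implicit Defensive.
Import Order.TTheory GRing.Theory Num.Theory.
Local Open Scope ring_scope.

(** The objective [nu |-> \sum_i gamma_i beta(nu; H_i)] is a multilinear
    polynomial in the edge weights, homogeneous of degree [m].  Moving mass
    [t] from an edge [e] to an edge [e'] changes it by [t (d_e' - d_e)] up to
    a multiple of [t^2], where [d_e] is the partial derivative in the weight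
    of [e]; so at a maximizer [d_e] is maximal on every edge carrying
    positive mass.  By Euler's identity [\sum_e mu(e) d_e = m O], a convex
    combination of the [d_e], this maximum is [m O], and
    [mu(e) d_e = m O mu(e)] is the edge identity.  Summing it over the edges
    at [x] and counting the edges of each copy through [x] gives the vertex
    identity. *)

Lemma first_order_le0 (R : realFieldType) (a b d : R) : 0 < d ->
  (forall t, 0 < t -> t <= d -> t * a - t ^+ 2 * b <= 0) -> a <= 0.
Proof.
move=> d_gt0 small_t; rewrite leNgt; apply/negP => a_gt0.
have b1_gt0 : 0 < `|b| + 1 by rewrite ltr_wpDl.
pose t := Num.min d (a / (`|b| + 1)).
have t_gt0 : 0 < t by rewrite lt_min d_gt0 divr_gt0.
have t_le_d : t <= d by rewrite ge_min lexx.
have tb1_le : t * (`|b| + 1) <= a by rewrite -ler_pdivlMr // ge_min lexx orbT.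
have tb_le : t ^+ 2 * b <= t * (t * `|b|).
  by rewrite expr2 -mulrA !(ler_wpM2l (ltW t_gt0)) ?ler_norm.
have : 0 < t * (a - t * `|b|) by rewrite mulr_gt0 // subr_gt0; lra.
have := small_t t t_gt0 t_le_d.
lra.
Qed.

Section MultilinearOnSimplex.
Variables (R : realFieldType) (T I : finType).
Variables (P : pred T) (Q : pred I) (w : I -> R) (S : I -> {set T}).

Definition simplex (mu : T -> R) : Prop :=
  (forall e, P e -> 0 <= mu e) /\ \sum_(e | P e) mu e = 1.

Definition mlpoly (nu : T -> R) : R :=
  \sum_(p | Q p) w p * \prod_(g in S p) nu g.

Definition dprod (mu : T -> R) (A : {set T}) (e : T) : R :=
  if e \in A then \prod_(g in A :\ e) mu g else 0.

Definition d2prod (mu : T -> R) (A : {set T}) (e e' : T) : R :=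
  if (e \in A) && (e' \in A) then \prod_(g in A :\ e :\ e') mu g else 0.

Definition partial (mu : T -> R) (e : T) : R :=
  \sum_(p | Q p) w p * dprod mu (S p) e.

Definition partial2 (mu : T -> R) (e e' : T) : R :=
  \sum_(p | Q p) w p * d2prod mu (S p) e e'.

Definition transfer (mu : T -> R) (e e' : T) (t : R) (g : T) : R :=
  if g == e' then mu g + t else if g == e then mu g - t else mu g.

Lemma simplex_transfer (mu : T -> R) (e e' : T) (t : R) :
  simplex mu -> P e -> P e' -> e != e' -> 0 <= t <= mu e ->
  simplex (transfer mu e e' t).
Proof.
move=> [mu_ge0 mu_sum1] Pe Pe' ee' /andP[t_ge0 t_le].
split=> [g Pg | ]; rewrite /transfer.
  case: eqP => [->|_]; first by rewrite addr_ge0 ?mu_ge0.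
  by case: eqP => [->|_]; rewrite ?subr_ge0 ?mu_ge0.
rewrite -mu_sum1 (bigD1 e') //= [in RHS](bigD1 e') //=.
rewrite (bigD1 e) /= ?Pe ?ee' // [in RHS](bigD1 e) /= ?Pe ?ee' // !eqxx (negbTE ee').
rewrite (eq_bigr mu) => [|g /andP[/andP[_ /negbTE ->] /negbTE ->] //].
ring.
Qed.

Lemma prod_transfer (mu : T -> R) (e e' : T) (t : R) (A : {set T}) : e != e' ->
  \prod_(g in A) transfer mu e e' t g =
    \prod_(g in A) mu g + t * (dprod mu A e' - dprod mu A e)
    - t ^+ 2 * d2prod mu A e e'.
Proof.
move=> ee'; rewrite /dprod /d2prod.
have transfer_id g : g != e -> g != e' -> transfer mu e e' t g = mu g.
  by rewrite /transfer => /negbTE-> /negbTE->.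
have transfer_e : transfer mu e e' t e = mu e - t.
  by rewrite /transfer eqxx (negbTE ee').
have transfer_e' : transfer mu e e' t e' = mu e' + t by rewrite /transfer eqxx.
have [eA|eA] := boolP (e \in A); have [e'A|e'A] := boolP (e' \in A) => /=.
- have e'Ae : e' \in A :\ e by rewrite !inE eq_sym ee'.
  rewrite !(big_setD1 e eA) !(big_setD1 e' e'Ae) /=.
  have eAe' : e \in A :\ e' by rewrite !inE ee'.
  have swap : A :\ e' :\ e = A :\ e :\ e' by rewrite !setDDl setUC.
  rewrite (big_setD1 e eAe') /= swap.
  rewrite (eq_bigr mu) => [|g]; last by rewrite !inE => /and3P[? ? _]; apply: transfer_id.
  rewrite transfer_e transfer_e'; ring.
- rewrite !(big_setD1 e eA) /= transfer_e.
  rewrite (eq_bigr mu) => [|g]; first ring.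
  by rewrite !inE => /andP[ge gA]; rewrite transfer_id //; apply: contraNneq e'A => <-.
- rewrite !(big_setD1 e' e'A) /= transfer_e'.
  rewrite (eq_bigr mu) => [|g]; first ring.
  by rewrite !inE => /andP[ge' gA]; rewrite transfer_id //; apply: contraNneq eA => <-.
- rewrite (eq_bigr mu) => [|g gA]; first ring.
  by rewrite transfer_id //; [apply: contraNneq eA | apply: contraNneq e'A] => <-.
Qed.

Lemma mlpoly_transfer (mu : T -> R) (e e' : T) (t : R) : e != e' ->
  mlpoly (transfer mu e e' t) =
    mlpoly mu + t * (partial mu e' - partial mu e) - t ^+ 2 * partial2 mu e e'.
Proof.
move=> ee'; rewrite /mlpoly /partial /partial2 mulrBr !mulr_sumr -!sumrB.
rewrite -big_split -sumrB /=; apply: eq_bigr => p _.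
rewrite prod_transfer //; ring.
Qed.

Lemma mul_partial (mu : T -> R) (e : T) :
  mu e * partial mu e =
    \sum_(p | Q p) w p * (if e \in S p then \prod_(g in S p) mu g else 0).
Proof.
rewrite /partial /dprod mulr_sumr; apply: eq_bigr => p _.
by rewrite mulrCA; case: ifP => [eS|_]; rewrite ?(big_setD1 e eS) ?mulr0.
Qed.

Section Maximizer.
Variables (m : nat) (mu : T -> R).
Hypothesis homogeneous : forall p, Q p -> #|S p| = m.
Hypothesis support : forall p, Q p -> {subset S p <= P}.
Hypothesis mu_simplex : simplex mu.
Hypothesis mu_max : forall nu, simplex nu -> mlpoly nu <= mlpoly mu.

Lemma euler_mlpoly : \sum_(e | P e) mu e * partial mu e = m%:R * mlpoly mu.
Proof.
under eq_bigr do rewrite mul_partial.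
rewrite exchange_big /mlpoly mulr_sumr; apply: eq_bigr => p Qp.
rewrite -mulr_sumr mulrCA -big_mkcondr /=.
rewrite (eq_bigl (mem (S p))) => [|e]; last by rewrite andb_idl //; apply: support.
by rewrite sumr_const homogeneous // mulr_natl.
Qed.

Lemma partial_le_on_support e e' : P e -> P e' -> 0 < mu e ->
  partial mu e' <= partial mu e.
Proof.
move=> Pe Pe' mue_gt0; have [<-//|ee'] := eqVneq e e'.
rewrite -subr_le0; apply: (@first_order_le0 _ _ (partial2 mu e e') _ mue_gt0).
move=> t t_gt0 t_le; have t_ok : 0 <= t <= mu e by rewrite ltW.
have := mu_max (simplex_transfer mu_simplex Pe Pe' ee' t_ok).
by rewrite mlpoly_transfer //; lra.
Qed.

Lemma partial_on_support e : P e -> 0 < mu e -> partial mu e = m%:R * mlpoly mu.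
Proof.
have [mu_ge0 mu_sum1] := mu_simplex.
move=> Pe mue_gt0; rewrite -euler_mlpoly -[partial mu e]mul1r -mu_sum1 mulr_suml.
apply/le_anti/andP; split; apply: ler_sum => e' Pe'; last first.
  by apply: ler_wpM2l; [exact: mu_ge0 | exact: partial_le_on_support].
have := mu_ge0 e' Pe'; rewrite le_eqVlt => /predU1P[<-|mue'_gt0].
  by rewrite !mul0r.
by rewrite ler_pM2l ?partial_le_on_support.
Qed.

Lemma maximizer_mul_partial e : P e ->
  m%:R * mlpoly mu * mu e = mu e * partial mu e.
Proof.
have [mu_ge0 _] := mu_simplex.
move=> Pe; have := mu_ge0 e Pe; rewrite le_eqVlt => /predU1P[<-|mue_gt0].
  by rewrite mulr0 mul0r.
by rewrite partial_on_support // mulrC.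
Qed.

End Maximizer.
End MultilinearOnSimplex.

Section Copies.
Variables (V : finType) (G : sgraph) (c : subgr V).
Hypothesis c_copy : is_copy G c.

Lemma copy_edge_is_edge e : e \in c.2 -> is_edge e.
Proof.
have [f /and3P[/injectiveP f_inj _ /eqP->]] := existsP c_copy.
case/imsetP=> e0 e0G ->; rewrite /is_edge card_imset //.
by have /forallP/(_ e0) := gE_ok G; rewrite e0G.
Qed.

Lemma card_copy_edges : #|c.2| = #|gE G|.
Proof.
have [f /and3P[/injectiveP f_inj _ /eqP->]] := existsP c_copy.
by rewrite card_imset //; apply: imset_inj.
Qed.

Lemma copy_vertices_of_edge e x : e \in c.2 -> x \in e -> x \in c.1.
Proof.
have [f /and3P[_ /eqP-> /eqP->]] := existsP c_copy.
by case/imsetP=> e0 _ -> /imsetP[y _ ->]; apply: imset_f.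
Qed.

Lemma sum_copy_edges_at (R : pzSemiRingType) x (a : R) :
  \sum_(e | is_edge e && (x \in e)) (if e \in c.2 then a else 0) =
    if x \in c.1 then (degc c x)%:R * a else 0.
Proof.
rewrite -big_mkcondr /= (eq_bigl (mem [set e in c.2 | x \in e])); last first.
  move=> e; rewrite !inE; case ec: (e \in c.2); rewrite ?andbF //.
  by rewrite andbT (copy_edge_is_edge ec).
rewrite sumr_const /degc; case: ifP => [_|xc]; first by rewrite mulr_natl.
suff -> : [set e in c.2 | x \in e] = set0 by rewrite cards0.
apply/setP=> e; rewrite !inE; apply/negbTE/andP => -[ec xe].
by rewrite (copy_vertices_of_edge ec xe) in xc.
Qed.

End Copies.

Lemma sum_edges_at (R : nmodType) (V : finType) (x : V) (F : {set V} -> R) :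
  \sum_(y | y != x) F [set x; y] = \sum_(e | is_edge e && (x \in e)) F e.
Proof.
pose other (e : {set V}) := odflt x [pick y in e :\ x].
have pick1 y : [pick z in [set y]] = Some y.
  by case: pickP => [z /set1P->|/(_ y)]; rewrite ?set11.
rewrite (reindex_onto (fun y => [set x; y]) other) => [|e /andP[/eqP e2 xe]].
  apply: eq_bigl => y; have [<-|xy] := eqVneq x y.
    by rewrite /is_edge setUid cards1.
  by rewrite /is_edge cards2 xy set21 /other setU1K ?pick1 ?eqxx // inE.
have : #|e :\ x| = 1%N by move: e2; rewrite (cardsD1 x e) xe => -[].
by move/eqP/cards1P=> [y ey]; rewrite /other ey pick1 /= -ey setD1K.
Qed.

Lemma sum_copies_pair (R : comPzSemiRingType) (V : finType) (k : nat)
    (H : 'I_k -> sgraph) (gamma : 'I_k -> R) (F : 'I_k -> subgr V -> R) :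
  \sum_i gamma i * \sum_(c | is_copy (H i) c) F i c =
    \sum_(p : 'I_k * subgr V | is_copy (H p.1) p.2) gamma p.1 * F p.1 p.2.
Proof. by under eq_bigr do rewrite mulr_sumr; rewrite pair_big_dep. Qed.

Theorem lemma4p3 (R : realType) (V : finType) (m k : nat)
    (H : 'I_k -> sgraph) (gamma : 'I_k -> R) (mu : {set V} -> R) :
  (0 < m)%N ->
  (forall i, #|gE (H i)| = m) ->
  (2 <= #|V|)%N ->
  in_Delta mu ->
  (forall nu : {set V} -> R, in_Delta nu ->
     \sum_i gamma i * beta nu (H i) <= \sum_i gamma i * beta mu (H i)) ->
  let O := \sum_i gamma i * beta mu (H i) in
  (forall e : {set V}, is_edge e ->
     m%:R * O * mu e =
     \sum_i gamma i * \sum_(c | is_copy (H i) c && (e \in c.2)) muH mu c) /\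
  (forall x : V,
     m%:R * O * mubar mu x =
     \sum_i gamma i *
       \sum_(c | is_copy (H i) c && (x \in c.1)) (degc c x)%:R * muH mu c).
Proof.
move=> _ H_m _ mu_simplex mu_max O.
have objective nu : \sum_i gamma i * beta nu (H i) =
    mlpoly (fun p : 'I_k * subgr V => is_copy (H p.1) p.2) (fun p => gamma p.1)
      (fun p => p.2.2) nu.
  exact: sum_copies_pair.
have edge_id e : is_edge e -> m%:R * O * mu e =
    \sum_i gamma i * \sum_(c | is_copy (H i) c) (if e \in c.2 then muH mu c else 0).
  move=> e_edge; rewrite /O objective (maximizer_mul_partial (P := @is_edge V)) //.
  - by rewrite mul_partial sum_copies_pair.
  - by move=> p p_copy; rewrite -(H_m p.1); apply: card_copy_edges.
  - by move=> p /copy_edge_is_edge.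
  - by move=> nu /mu_max; rewrite !objective.
split=> [e e_edge | x].
  by rewrite edge_id //; apply: eq_bigr => i _; rewrite big_mkcondr.
rewrite /mubar mulr_sumr (sum_edges_at x (fun e => m%:R * O * mu e)).
under eq_bigr => e /andP[e_edge _] do rewrite edge_id //.
rewrite exchange_big; apply: eq_bigr => i _; rewrite -mulr_sumr; congr (_ * _).
rewrite exchange_big [in RHS]big_mkcondr; apply: eq_bigr => c c_copy.
exact: (sum_copy_edges_at c_copy x (muH mu c)).
Qed.
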